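(* Let $T_{\max}$ be a positive integer and suppose the attack period $T_a=[k_s,k_e)$ satisfies $|T_a|=k_e-k_s\le T_{\max}$. For every integer timestep $k\ge T_{\max}$, writing $k'=k-T_{\max}$, the set $$\hat{I}_k=\mathbf{Post}_{u_{c,k'}\dots u_{c,k-1}}\big(\tilde{x}_{k'}\big)\cup\{\tilde{x}_k\}$$ contains the actual state, i.e. $x_k\in\hat{I}_k$.
   Context: There are $n$ vehicles with positions $x_k\in\mathbb{R}^n$ evolving in discrete time by $x_{k+1}=x_k+u_k+\delta_k$. The coordinates are partitioned into controlled and uncontrolled vehicles, and $u_k=(u_{c,k},u_{uc,k})$ with $u_{c,k}\in U_c$ (applied input of the controlled vehicles, known) and $u_{uc,k}\in U_{uc}$ (unknown inputs of uncontrolled vehicles). The disturbance satisfies $\delta_k\in\Delta=[\delta_{\min},\delta_{\max}]^n$. The multi-step post operator is $\mathbf{Post}_{u_{c,1}\dots u_{c,m}}(y)=\big\{y+\sum_{j=1}^m (u_{c,j},u_{uc,j})+\sum_{j=1}^m\delta_j:\ u_{uc,j}\in U_{uc},\ \delta_j\in\Delta\big\}$, where $(u_c,u_{uc})$ denotes the vector in $\mathbb{R}^n$ whose controlled coordinates are $u_c$ and uncontrolled coordinates are $u_{uc}$. Sensor attack: the received measurement is $\tilde{x}_k=x_k+e_k$ for $k\in T_a=[k_s,k_e)$ (a single interval of integer timesteps) with arbitrary error $e_k\in\mathbb{R}^n$, and $\tilde{x}_k=x_k$ for $k\notin T_a$. *)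

From HB Require Import structures.
From mathcomp Require Import all_boot all_order all_algebra.
Set Implicit Arguments. Unset Strict Implicit. Unset Printing Implicit Defensive.
Import Order.TTheory GRing.Theory Num.Theory.
Local Open Scope ring_scope.

(* The coordinates are partitioned
   by the boolean predicate [ctrl] (true = controlled vehicle).
   The controlled input u_c and the uncontrolled input u_uc are represented as
   vectors of 'rV[R]_n of which only the controlled (resp. uncontrolled)
   coordinates are used; [combine ctrl uc uuc] is the vector (u_c, u_uc). *)
Definition combine (R : realFieldType) (n : nat) (ctrl : pred 'I_n)
  (uc uuc : 'rV[R]_n) : 'rV[R]_n :=
  \row_i (if ctrl i then uc 0 i else uuc 0 i).

Definition inDelta (R : realFieldType) (n : nat) (dmin dmax : R)
  (d : 'rV[R]_n) : Prop :=
  forall i, dmin <= d 0 i <= dmax.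

Definition Post (R : realFieldType) (n : nat) (ctrl : pred 'I_n)
  (Uuc : 'rV[R]_n -> Prop) (dmin dmax : R) (ucs : seq 'rV[R]_n)
  (y : 'rV[R]_n) (z : 'rV[R]_n) : Prop :=
  exists (w d : 'I_(size ucs) -> 'rV[R]_n),
    (forall j, Uuc (w j)) /\ (forall j, inDelta dmin dmax (d j)) /\
    z = y + \sum_(j < size ucs) combine ctrl (nth 0 ucs j) (w j)
          + \sum_(j < size ucs) d j.

(* Unrolling the dynamics over the window [k - Tmax, k) shows that the true state x_k is
   always in Post(x_(k - Tmax)).  If the measurement at k is not attacked, x_k = xt_k;
   otherwise k lies in the attack window, which has length at most Tmax, so k - Tmax
   precedes it and the measurement xt_(k - Tmax) is the true state. *)
From HB Require Import structures.
From mathcomp Require Import all_boot all_order all_algebra.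
From mathcomp Require Import zify.
Import Order.TTheory GRing.Theory Num.Theory.
Local Open Scope ring_scope.

Section Trajectory.

Variables (R : realFieldType) (n : nat) (ctrl : pred 'I_n).
Variables (x uc uuc delta : nat -> 'rV[R]_n).
Hypothesis x_step : forall k, x k.+1 = x k + combine ctrl (uc k) (uuc k) + delta k.

Lemma trajectory_unroll m t :
  x (m + t)%N = x m + \sum_(j < t) combine ctrl (uc (m + j)%N) (uuc (m + j)%N)
                    + \sum_(j < t) delta (m + j)%N.
Proof.
elim: t => [|t IH]; first by rewrite !big_ord0 addn0 !addr0.
rewrite addnS x_step IH !big_ord_recr /= -!addrA.
by congr (_ + _); congr (_ + _); exact: addrCA.
Qed.

Lemma trajectory_in_Post (Uuc : 'rV[R]_n -> Prop) (dmin dmax : R) m t :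
  (forall k, Uuc (uuc k)) -> (forall k, inDelta dmin dmax (delta k)) ->
  Post ctrl Uuc dmin dmax [seq uc j | j <- iota m t] (x m) (x (m + t)%N).
Proof.
move=> uuc_in delta_in.
have size_s : size [seq uc j | j <- iota m t] = t by rewrite size_map size_iota.
rewrite /Post size_s.
exists (fun j => uuc (m + j)%N), (fun j => delta (m + j)%N).
split=> [j|]; first exact: uuc_in.
split=> [j|]; first exact: delta_in.
rewrite trajectory_unroll; congr (_ + _ + _).
apply: eq_bigr => j _.
by rewrite (nth_map 0%N) ?size_iota // nth_iota.
Qed.

End Trajectory.

Lemma lookback_before_window {ks ke T k : nat} :
  (T <= k)%N -> (k < ke)%N -> (ke - ks <= T)%N -> (k - T < ks)%N.
Proof. lia. Qed.

Theorem lemma3 (R : realFieldType) (n : nat) (ctrl : pred 'I_n)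
  (Uc Uuc : 'rV[R]_n -> Prop) (dmin dmax : R)
  (x : nat -> 'rV[R]_n) (uc uuc : nat -> 'rV[R]_n) (delta : nat -> 'rV[R]_n)
  (xt : nat -> 'rV[R]_n) (ks ke Tmax : nat) :
  (forall k, Uc (uc k)) ->
  (forall k, Uuc (uuc k)) ->
  (forall k, inDelta dmin dmax (delta k)) ->
  (forall k, x k.+1 = x k + combine ctrl (uc k) (uuc k) + delta k) ->
  (forall k, ~ (ks <= k < ke)%N -> xt k = x k) ->
  (0 < Tmax)%N ->
  (ke - ks <= Tmax)%N ->
  forall k : nat, (Tmax <= k)%N ->
    Post ctrl Uuc dmin dmax [seq uc j | j <- iota (k - Tmax)%N Tmax] (xt (k - Tmax)%N) (x k)
    \/ x k = xt k.
Proof.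
move=> _ uuc_in delta_in x_step xt_clean _ window_le k Tmax_le_k.
have [/andP [ks_le_k k_lt_ke] | k_clean] := boolP (ks <= k < ke)%N; last first.
  by right; rewrite xt_clean //; apply/negP.
left.
have lookback_clean : xt (k - Tmax)%N = x (k - Tmax)%N.
  apply: xt_clean => /andP [ks_le _].
  by have := lookback_before_window Tmax_le_k k_lt_ke window_le; rewrite ltnNge ks_le.
rewrite lookback_clean -[x k](congr1 x (subnK Tmax_le_k)).
exact: trajectory_in_Post.
Qed.
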